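(* Let $\mathcal M$ satisfy Assumption (A), let $F$ and $\{f_s\}_{s\in\mathcal S}$ be as in the context, and suppose Assumption (I) holds. For $s,s'\in\mathcal S$ define $T^*_{\langle s'|s\rangle}:=f_{s'}\circ f_s^{-1}|_{\mathcal X_s}$ ($\mu_s$-a.e. defined). Then for all $s,s'\in\mathcal S$: 1. $\mu_{\langle s'|s\rangle}(\cdot\mid x)=\delta_{T^*_{\langle s'|s\rangle}(x)}$ for $\mu_s$-almost every $x\in\mathcal X_s$; 2. $\mu_{\langle s'|s\rangle}=(T^*_{\langle s'|s\rangle})_\sharp\mu_s$; 3. $\pi^*_{\langle s'|s\rangle}=(I\times T^*_{\langle s'|s\rangle})_\sharp\mu_s$, where $I$ is the identity.
   Context: Let $(\Omega,\mathcal A,\mathbb P)$ be a probability space. A structural causal model (SCM) $\mathcal M=\langle U,G\rangle$ consists of two disjoint finite index sets $\mathcal I$ (endogenous) and $\mathcal J$ (exogenous), measurable product spaces $\mathcal V=\prod_{i\in\mathcal I}\mathcal V_i\subseteq\mathbb R^{|\mathcal I|}$ and $\mathcal U=\prod_{j\in\mathcal J}\mathcal U_j\subseteq\mathbb R^{|\mathcal J|}$, a random vector $U:\Omega\to\mathcal U$ (its components need not be independent), and for each $i\in\mathcal I$ subsets $\mathrm{Endo}(i)\subseteq\mathcal I$, $\mathrm{Exo}(i)\subseteq\mathcal J$ (endogenous and exogenous parents) and a measurable map $G_i:\mathcal V_{\mathrm{Endo}(i)}\times\mathcal U_{\mathrm{Exo}(i)}\to\mathcal V_i$. A random vector $V:\Omega\to\mathcal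 V$ is a solution of $\mathcal M$ if $V_i=G_i(V_{\mathrm{Endo}(i)},U_{\mathrm{Exo}(i)})$ $\mathbb P$-a.s. for every $i\in\mathcal I$. The graph of $\mathcal M$ has nodes $\mathcal I\cup\mathcal J$ and an edge $k\to l$ iff $l\in\mathcal I$ and $k\in\mathrm{Endo}(l)\cup\mathrm{Exo}(l)$. Assumption (A): the graph of $\mathcal M$ is acyclic; then $\mathcal M$ has a solution, unique up to $\mathbb P$-null sets. For $I\subseteq\mathcal I$ and $v_I\in\mathcal V_I$, the do-intervention $\mathrm{do}(V_I=v_I)$ produces the model $\langle U,\tilde G\rangle$ with $\tilde G_i\equiv v_i$ for $i\in I$ and $\tilde G_i=G_i$ otherwise (same $U$); it is again acyclic, and its solution is denoted $V_{V_I=v_I}$. Standing setting: the solution is $V=(X,S)$ where $X:\Omega\to\mathcal X\subseteq\mathbb R^d$ and $S:\Omega\to\mathcal S$ with $\mathcal S\subset\mathbb R$ finite and $\mathbb P(S=s)>0$ for all $s\in\mathcal S$. $U_X$ denotes the vector of exogenous parents of the components of $X$, and $U_S$ that of $S$. For $s\in\mathcal S$, $X_{S=s}$ denotes the $X$-component of the solution of the model intervened by $\mathrm{do}(S=s)$. Notation: $\mu_s:=\mathcal L(X\mid S=s)$ with support $\mathcal X_s$; $\mu_{S=s}:=\mathcal L(X_{S=s})$; $\mu_{\langle s'|s\rangle}:=\mathcal L(X_{S=s'}\mid S=s)$; $\mu_{\langle s'|s\rangle}(\cdot\mid x):=\mathcal L(X_{S=s'}\mid X=x,S=s)$. The structural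 counterfactual coupling is $\pi^*_{\langle s'|s\rangle}:=\mathcal L\big((X,X_{S=s'})\mid S=s\big)$. Under (A) there is a measurable $F$ with $X=F(S,U_X)$ a.s. and $X_{S=s}=F(s,U_X)$ a.s. for every $s$; set $f_s(u):=F(s,u)$. Assumption (I): the functions $\{f_s\}_{s\in\mathcal S}$ are injective. For a measurable map $T$ and measure $P$, $T_\sharp P:=P\circ T^{-1}$; $(T_1\times T_2)(x):=(T_1(x),T_2(x))$. *)

From HB Require Import structures.
From mathcomp Require Import all_boot all_order all_algebra.
From mathcomp Require Import all_classical all_reals all_analysis.
Set Implicit Arguments. Unset Strict Implicit. Unset Printing Implicit Defensive.
Import Order.TTheory GRing.Theory Num.Theory.
Local Open Scope classical_set_scope.
Local Open Scope ring_scope.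

(* Vectors in R^n are n-tuples, with the product (= Borel) sigma-algebra
   provided by MathComp-Analysis. Endogenous indices I = 'I_n,
   exogenous indices J = 'I_m. *)

Definition prodset (R : Type) (n : nat) (A : 'I_n -> set R) : set (n.-tuple R) :=
  [set v | forall i, A i (tnth v i)].

(* A structural causal model <U, G>  (the random vector U is kept separate). *)
Record SCM (R : realType) (n m : nat) := mkSCM {
  Vsp  : 'I_n -> set R;
  Usp  : 'I_m -> set R;
  Endo : 'I_n -> {set 'I_n};
  Exo  : 'I_n -> {set 'I_m};
  Gfun : 'I_n -> n.-tuple R * m.-tuple R -> R
}.

Definition wf_SCM (R : realType) n m (M : SCM R n m) : Prop :=
  [/\ (forall i, measurable (Vsp M i)),
      (forall j, measurable (Usp M j)),
      (forall i (v v' : n.-tuple R) (u u' : m.-tuple R),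
          (forall k, k \in Endo M i -> tnth v k = tnth v' k) ->
          (forall j, j \in Exo M i -> tnth u j = tnth u' j) ->
          Gfun M i (v, u) = Gfun M i (v', u')),
      (forall i, measurable_fun (prodset (Vsp M) `*` prodset (Usp M)) (Gfun M i))
    & (forall i v u, prodset (Vsp M) v -> prodset (Usp M) u ->
          Vsp M i (Gfun M i (v, u)))].

(* Edges between exogenous nodes and
   endogenous ones can never lie on a cycle (exogenous nodes have no
   incoming edges), so acyclicity is the absence of a cycle k -> l -> ... -> k
   in the endogenous relation  a -> b  iff  a \in Endo b. *)
Definition endo_rel (R : realType) n m (M : SCM R n m) : rel 'I_n :=
  fun a b => a \in Endo M b.

Definition acyclic_SCM (R : realType) n m (M : SCM R n m) : Prop :=
  forall k l : 'I_n, k \in Endo M l -> ~~ connect (endo_rel M) l k.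

Definition is_solution (R : realType) (d0 : measure_display)
    (Omega : measurableType d0) (P : probability Omega R) n m
    (M : SCM R n m) (U : Omega -> m.-tuple R) (V : Omega -> n.-tuple R) : Prop :=
  [/\ measurable_fun setT V,
      (forall w, prodset (Vsp M) (V w))
    & (forall i, {ae P, forall w, tnth (V w) i = Gfun M i (V w, U w)})].

Definition do_model (R : realType) n m (M : SCM R n m) (I0 : {set 'I_n})
    (v : 'I_n -> R) : SCM R n m :=
  mkSCM (Vsp M) (Usp M)
    (fun i => if i \in I0 then finset.set0 else Endo M i)
    (fun i => if i \in I0 then finset.set0 else Exo M i)
    (fun i => if i \in I0 then (fun _ => v i) else Gfun M i).

(* Standing setting: V = (X, S) with X the first d components, S the last. *)
Definition widen_d (d : nat) (k : 'I_d) : 'I_d.+1 := widen_ord (leqnSn d) k.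

Definition Xpart (R : Type) (d : nat) (v : d.+1.-tuple R) : d.-tuple R :=
  [tuple tnth v (widen_d i) | i < d].

Definition Spart (R : Type) (d : nat) (v : d.+1.-tuple R) : R := tnth v ord_max.

Definition JX (R : realType) d m (M : SCM R d.+1 m) : {set 'I_m} :=
  \bigcup_(k < d) Exo M (widen_d k).

(* U_X, represented inside R^m with the coordinates outside J set to 0,
   and its state space  prod_{j in J} U_j  in the same representation. *)
Definition UXof (R : realType) m (J : {set 'I_m}) (u : m.-tuple R) : m.-tuple R :=
  [tuple (if j \in J then tnth u j else 0) | j < m].

Definition UXsp (R : realType) m (Usp : 'I_m -> set R) (J : {set 'I_m}) :
    set (m.-tuple R) :=
  [set u | forall j, if j \in J then Usp j (tnth u j) else tnth u j = 0].

Definition condlaw (R : realType) (d0 : measure_display) (Omega : measurableType d0)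
    (P : probability Omega R) (T : Type) (E : set Omega) (Y : Omega -> T) :
    set T -> \bar R :=
  fun A => (P (Y @^-1` A `&` E) * ((fine (P E))^-1)%:E)%E.

Definition tuple_open (R : realType) d (A : set (d.-tuple R)) : Prop :=
  forall x, A x -> exists e : R, 0 < e /\
    forall y : d.-tuple R, (forall i, `|tnth y i - tnth x i| < e) -> A y.

Definition supp (R : realType) d (mu : set (d.-tuple R) -> \bar R) :
    set (d.-tuple R) :=
  [set x | forall A, tuple_open A -> A x -> (0 < mu A)%E].

From HB Require Import structures.
From mathcomp Require Import all_boot all_order all_algebra.
From mathcomp Require Import all_classical all_reals all_analysis.
From mathcomp Require Import lra.
Import Order.TTheory GRing.Theory Num.Theory.
Local Open Scope classical_set_scope.
Local Open Scope ring_scope.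

(* On E = {S = s} the factual and counterfactual outcomes are X = f_s(U_X)
   and X' = f_s'(U_X).  As T (f_s u) = f_s' u on the support of
   mu_s = L(X | S = s) and f_s is injective, the u recovered from X is U_X
   itself, so X' = T(X) almost surely on E (counterfactual_transport).
   Conditional laws only see their variables almost surely on E
   (condlaw_ae_congr), which gives L(X' | E) = T_# mu_s and
   L((X, X') | E) = (I x T)_# mu_s.  A kernel disintegrating (I x T)_# mu_s
   along mu_s equals delta_T mu_s-a.e., first set by set (equal integrals on
   all measurable sets) and then on all Borel sets at once, because the
   countable family of rational boxes separates points (dirac_from_boxes). *)

Set Implicit Arguments. Unset Strict Implicit. Unset Printing Implicit Defensive.

Section RationalBoxes.
Context {R : realType} {d : nat}.

(* Open boxes with rational corners: a countable basis of the topology. *)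
Definition box (t : d.-tuple (rat * rat)) : set (d.-tuple R) :=
  [set v | forall i, ratr (tnth t i).1 < tnth v i < ratr (tnth t i).2].

Definition boxn (k : nat) : set (d.-tuple R) :=
  match unpickle k with Some t => box t | None => set0 end.

Lemma boxnE t : boxn (pickle t) = box t.
Proof. by rewrite /boxn pickleK. Qed.

Lemma box_measurable t : measurable (box t).
Proof.
pose G (i : 'I_d) : set (d.-tuple R) :=
  (fun v => tnth v i) @^-1` `](ratr (tnth t i).1 : R), ratr (tnth t i).2[.
pose H (k : nat) : set (d.-tuple R) :=
  match insub k with Some i => ~` G i | None => set0 end.
have -> : box t = ~` \bigcup_k H k.
  apply/seteqP; split => [v bv [k _]|v nv i].
    rewrite /H; case: (insub k) => [i|//]; apply; rewrite /G /=.
    by rewrite in_itv /=; exact: bv.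
  apply/negPn/negP => hi; apply: nv; exists (val i) => //.
  by rewrite /H valK /G /= in_itv /=; apply/negP.
apply: measurableC; apply: bigcupT_measurable => k; rewrite /H.
case: insubP => [i _ _|]; last by [].
apply: measurableC; rewrite -[X in measurable X]setTI.
by apply: measurable_tnth => //; exact: measurable_itv.
Qed.

Lemma boxn_measurable k : measurable (boxn k).
Proof. by rewrite /boxn; case: unpickle => [t|//]; exact: box_measurable. Qed.

Lemma box_approx (x : d.-tuple R) (e : R) : 0 < e ->
  exists t, box t x /\ forall y, box t y -> forall i, `|tnth y i - tnth x i| < e.
Proof.
move=> e0.
have : forall i : 'I_d, exists q : rat * rat,
    (tnth x i - e < ratr q.1 < tnth x i) && (tnth x i < ratr q.2 < tnth x i + e).
  move=> i.
  have [q1 hq1] : exists q, ratr q \in `](tnth x i - e), tnth x i[.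
    by apply: rat_in_itvoo; rewrite ltrBlDr ltrDl.
  have [q2 hq2] : exists q, ratr q \in `](tnth x i), (tnth x i + e)[.
    by apply: rat_in_itvoo; rewrite ltrDl.
  exists (q1, q2); rewrite in_itv /= in hq1; rewrite in_itv /= in hq2.
  by rewrite hq1 hq2.
case/fin_all_exists => f hf.
exists [tuple f i | i < d]; split.
  move=> i; rewrite tnth_mktuple.
  by have /andP[/andP[_ ->] /andP[-> _]] := hf i.
move=> y byt i; have := byt i; rewrite tnth_mktuple.
have /andP[/andP[h1 _] /andP[_ h2]] := hf i.
move=> /andP[a b].
have := lt_trans h1 a; have := lt_trans b h2.
rewrite ltr_norml; move=> u v; apply/andP; split; lra.
Qed.

(* An open set is the countable union of the rational boxes it contains. *)
Lemma tuple_open_measurable (A : set (d.-tuple R)) : tuple_open A -> measurable A.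
Proof.
move=> oA.
pose H (k : nat) := if pselect (boxn k `<=` A) is left _ then boxn k else set0.
have -> : A = \bigcup_k H k.
  apply/seteqP; split => [x Ax|x [k _]]; last first.
    by rewrite /H; case: pselect => // sA; exact: sA.
  have [e [e0 he]] := oA x Ax.
  have [t [bx bt]] := box_approx x e0.
  exists (pickle t) => //; rewrite /H; case: pselect => [_|[]]; rewrite boxnE //.
  by move=> y /bt /he.
apply: bigcupT_measurable => k; rewrite /H; case: pselect => _ //.
exact: boxn_measurable.
Qed.

(* Almost every point lies in the support: the complement of the support is
   covered by the countably many null rational boxes. *)
Lemma ae_supp (mu : {measure set (d.-tuple R) -> \bar R}) :
  {ae mu, forall x, supp mu x}.
Proof.
pose H (k : nat) := if pselect (mu (boxn k) = 0%E) is left _ then boxn k else set0.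
apply: (@negligibleS _ _ _ _ (\bigcup_k H k)).
  move=> x /= nx.
  have [A [oA Ax nA]] : exists A, [/\ tuple_open A, A x & ~ (0 < mu A)%E].
    apply: contra_notP nx => h B oB Bx.
    by apply: contra_notP h => hB; exists B.
  have A0 : mu A = 0%E.
    by apply/eqP; rewrite -measure_le0 leNgt; apply/negP.
  have [e [e0 he]] := oA x Ax.
  have [t [bx bt]] := box_approx x e0.
  exists (pickle t) => //; rewrite /H; case: pselect => [_|[]]; rewrite boxnE //.
  apply: subset_measure0 A0 => //; first exact: box_measurable.
    exact: tuple_open_measurable.
  by move=> y /bt /he.
apply: negligible_bigcup => k; rewrite /H; case: pselect => [h|_].
  by exists (boxn k); split => //; exact: boxn_measurable.
exact: negligible_set0.
Qed.

(* Rational boxes separate points, so a probability measure that agrees with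
   the Dirac mass at y on every rational box is that Dirac mass. *)
Lemma dirac_from_boxes (nu : {measure set (d.-tuple R) -> \bar R})
  (y : d.-tuple R) : nu setT = 1%E ->
  (forall k, nu (boxn k) = \d_y (boxn k)) ->
  forall B, measurable B -> nu B = \d_y B.
Proof.
move=> nu1 hk.
have splitT B : measurable B -> (nu B + nu (~` B) = 1)%E.
  move=> mB; rewrite -nu1 -(setUv B) measureU //; first exact: measurableC.
  by rewrite setICr.
have C0 k : boxn k y -> nu (~` boxn k) = 0%E.
  move=> byk; have := splitT _ (boxn_measurable k).
  rewrite hk /dirac indicE mem_set //.
  have : (0 <= nu (~` boxn k))%E by exact: measure_ge0.
  case: (nu (~` boxn k)) => [r|//|//]; rewrite lee_fin => r0.
  by rewrite -EFinD => -[]; move/eqP; rewrite addrC -subr_eq0 addrK => /eqP ->.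
pose Z : set (d.-tuple R) :=
  \bigcup_k (if pselect (boxn k y) is left _ then ~` boxn k else set0).
have nZ : nu.-negligible Z.
  apply: negligible_bigcup => k; case: pselect => [h|_].
    exists (~` boxn k); split => //.
      by apply: measurableC; exact: boxn_measurable.
    exact: C0.
  exact: negligible_set0.
have sZ : ~` [set y] `<=` Z.
  move=> z /= zy.
  have [i zi] : exists i, tnth z i != tnth y i.
    apply: contra_notP zy => h; apply: eq_from_tnth => i.
    by apply/eqP; apply: contra_notP h => hi; exists i; apply/negP.
  have e0 : (0 < `|tnth z i - tnth y i|)%R by rewrite normr_gt0 subr_eq0.
  have [t [bt ht]] := box_approx y e0.
  exists (pickle t) => //; case: pselect => [_|[]]; rewrite boxnE //.
  by move=> /ht /(_ i); rewrite ltxx.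
move=> B mB; rewrite /dirac indicE.
have [By|nBy] := pselect (B y).
  rewrite mem_set //.
  have : (nu (~` B) = 0)%E.
    apply/(negligibleP _ (measurableC mB)); apply: negligibleS nZ.
    by apply: subset_trans sZ => z /= nb zy; apply: nb; rewrite zy.
  by move=> h; have := splitT _ mB; rewrite h adde0.
rewrite memNset //; apply/(negligibleP _ mB); apply: negligibleS nZ.
by apply: subset_trans sZ => z /= bz zy; apply: nBy; rewrite -zy.
Qed.

End RationalBoxes.

Lemma measure_eq_off_null (R : realType) d0 (Omega : measurableType d0)
  (mu : {measure set Omega -> \bar R}) (A1 A2 N : set Omega) :
  measurable A1 -> measurable A2 -> measurable N -> mu N = 0%E ->
  (forall w, ~ N w -> (A1 w <-> A2 w)) -> mu A1 = mu A2.
Proof.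
move=> mA1 mA2 mN N0 h.
rewrite (measureDI mu mA1 mN) (measureDI mu mA2 mN).
rewrite (subset_measure0 (measurableI _ _ mA1 mN) mN (@subIsetr _ _ _) N0).
rewrite (subset_measure0 (measurableI _ _ mA2 mN) mN (@subIsetr _ _ _) N0).
by congr (_ + _)%E; congr (mu _); apply/seteqP; split => w [aw nw]; split => //;
  apply/(h w nw).
Qed.

(* The conditional law L(Y | E) packaged as a measure; the measurability
   proofs are only needed to establish sigma-additivity. *)
Definition cond_law (R : realType) d0 (Omega : measurableType d0)
  (P : probability Omega R) dT (T : measurableType dT) (E : set Omega)
  (Y : Omega -> T) (mE : measurable E) (mY : measurable_fun setT Y)
  (A : set T) : \bar R :=
  (((fine (P E))^-1)%:E * P (Y @^-1` A `&` E))%E.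

Section ConditionalLaw.
Local Open Scope ereal_scope.
Context (R : realType) (d0 : measure_display) (Omega : measurableType d0).
Variable (P : probability Omega R).
Context (dT : measure_display) (T : measurableType dT).
Variables (E : set Omega) (Y : Omega -> T).
Variables (mE : measurable E) (mY : measurable_fun setT Y).

Local Notation mu := (cond_law P mE mY).

Let preimage_measurable A : measurable A -> measurable (Y @^-1` A `&` E).
Proof.
by move=> mA; apply: measurableI => //; rewrite -[X in measurable X]setTI; exact: mY.
Qed.

Let cond_law0 : mu set0 = 0.
Proof. by rewrite /cond_law preimage_set0 set0I measure0 mule0. Qed.

Let cond_law_ge0 A : 0 <= mu A.
Proof. by rewrite /cond_law mule_ge0 // lee_fin invr_ge0 fine_ge0. Qed.

Let cond_law_sigma_additive : semi_sigma_additive mu.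
Proof.
move=> F mF tF mUF; rewrite /cond_law.
rewrite [X in X @ \oo --> _](_ : _ = (fun n => ((fine (P E))^-1)%:E *
    \sum_(0 <= i < n) P (Y @^-1` F i `&` E))); last first.
  by apply/funext => n; rewrite ge0_sume_distrr // => i _; exact: measure_ge0.
apply: cvgeZl => //.
rewrite preimage_bigcup setI_bigcupl.
apply: measure_semi_sigma_additive.
- by move=> n; exact: preimage_measurable.
- apply/trivIsetP => /= i j _ _ ij.
  rewrite setIACA -preimage_setI.
  by move/trivIsetP : tF => /(_ _ _ _ _ ij) ->//; rewrite preimage_set0 set0I.
- by rewrite -setI_bigcupl -preimage_bigcup; exact: preimage_measurable.
Qed.

HB.instance Definition _ :=
  isMeasure.Build _ _ _ mu cond_law0 cond_law_ge0 cond_law_sigma_additive.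

Lemma condlawE : condlaw P E Y = mu.
Proof. by apply/funext => A; rewrite /condlaw /cond_law muleC. Qed.

Lemma cond_law_fin A : measurable A -> mu A < +oo.
Proof.
move=> mA; rewrite /cond_law.
have h1 : P (Y @^-1` A `&` E) <= 1.
  by apply: probability_le1; exact: preimage_measurable.
apply: (@le_lt_trans _ _ (((fine (P E))^-1)%:E * 1)).
  by apply: lee_wpmul2l => //; rewrite lee_fin invr_ge0 fine_ge0.
by rewrite mule1 ltry.
Qed.

Lemma cond_law_ae (Q : T -> Prop) : 0 < P E ->
  {ae mu, forall x, Q x} -> {ae P, forall w, E w -> Q (Y w)}.
Proof.
move=> PE [N [mN N0 sN]].
have mYN := preimage_measurable mN.
exists (Y @^-1` N `&` E); split => //.
  move: N0 => /eqP; rewrite /cond_law mule_eq0 => /orP[|/eqP//].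
  have : (0 < fine (P E))%R.
    by apply: fine_gt0; rewrite PE /=; apply: le_lt_trans (ltry 1%R);
      exact: probability_le1.
  by rewrite eqe invr_eq0 => /lt0r_neq0 /negbTE ->.
move=> w /= nQ; apply: contra_notP nQ => nYN Ew; apply: contra_notP nYN => nQ.
by split => //; exact: sN.
Qed.

End ConditionalLaw.

Lemma condlaw_ae_congr (R : realType) d0 (Omega : measurableType d0)
  (P : probability Omega R) dT (T : measurableType dT) (E : set Omega)
  (Y1 Y2 : Omega -> T) (A : set T) :
  measurable E -> measurable_fun setT Y1 -> measurable_fun setT Y2 ->
  {ae P, forall w, E w -> Y1 w = Y2 w} -> measurable A ->
  condlaw P E Y1 A = condlaw P E Y2 A.
Proof.
move=> mE mY1 mY2 [N [mN N0 sN]] mA; rewrite /condlaw; congr (_ * _)%E.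
have mpre (Y : Omega -> T) : measurable_fun setT Y ->
    measurable (Y @^-1` A `&` E).
  by move=> mY; apply: measurableI => //; rewrite -[X in measurable X]setTI;
    exact: mY.
apply: (measure_eq_off_null (mpre _ mY1) (mpre _ mY2) mN N0) => w nNw.
have eqw : E w -> Y1 w = Y2 w.
  by apply: contra_notP nNw => /= h; exact: sN.
by split => -[Aw Ew]; split => //=; [rewrite -eqw | rewrite eqw].
Qed.

Lemma counterfactual_transport (R : realType) d0 (Omega : measurableType d0)
  (P : probability Omega R) (d : nat) (A : Type)
  (E : set Omega) (Y Y' : Omega -> d.-tuple R)
  (mE : measurable E) (mY : measurable_fun setT Y)
  (Ux : Omega -> A) (Dom : set A) (f f' : A -> d.-tuple R)
  (T : d.-tuple R -> d.-tuple R) :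
  (0 < P E)%E ->
  (forall w, Dom (Ux w)) ->
  (forall u1 u2, Dom u1 -> Dom u2 -> f u1 = f u2 -> u1 = u2) ->
  {ae P, forall w, E w -> Y w = f (Ux w)} ->
  {ae P, forall w, E w -> Y' w = f' (Ux w)} ->
  {ae cond_law P mE mY, forall x, supp (cond_law P mE mY) x ->
     exists u, Dom u /\ f u = x /\ T x = f' u} ->
  {ae P, forall w, E w -> Y' w = T (Y w)}.
Proof.
move=> PE Udom f_inj HY HY' HT.
have HT' := cond_law_ae PE HT.
have Hsupp := cond_law_ae PE (ae_supp (cond_law P mE mY)).
have HTsupp : {ae P, forall w, E w ->
    exists u, Dom u /\ f u = Y w /\ T (Y w) = f' u}.
  by apply: filterS2 HT' Hsupp => w hT hs Ew; exact: hT Ew (hs Ew).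
apply: filterS3 HY HY' HTsupp => w hY hY' hT Ew.
have [u [Du [fu Tu]]] := hT Ew.
have uE : Ux w = u by apply: f_inj => //; rewrite fu hY.
by rewrite hY' // Tu uE.
Qed.

Section DiracDisintegration.
Context {R : realType} {d : nat}.
Variable mu : {measure set (d.-tuple R) -> \bar R}.
Hypothesis mu_fin : (mu setT < +oo)%E.
Variable T : d.-tuple R -> d.-tuple R.
Hypothesis mT : measurable_fun setT T.
Variable kappa : R.-pker (d.-tuple R) ~> (d.-tuple R).
Hypothesis kappa_disintegrates : forall A B, measurable A -> measurable B ->
  mu (A `&` T @^-1` B) = (\int[mu]_(x in A) kappa x B)%E.

(* For a fixed B, x |-> kappa x B and x |-> delta_{T x} B have the same
   integral on every measurable set, hence agree almost everywhere. *)
Lemma disintegration_dirac_set B : measurable B ->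
  {ae mu, forall x, kappa x B = \d_(T x) B}.
Proof.
move=> mB.
have kappa_int : mu.-integrable setT (fun x => kappa x B).
  apply/integrableP; split; first exact: measurable_kernel.
  apply: (@le_lt_trans _ _ (1 * mu setT)%E); last by rewrite mul1e.
  apply: (integral_le_bound 1%E measurableT) => //; first exact: measurable_kernel.
  apply: nearW => x _; rewrite gee0_abs; last exact: measure_ge0.
  rewrite -(@prob_kernel _ _ _ _ _ kappa x); apply: le_measure; rewrite ?inE //.
have mTB : measurable (T @^-1` B).
  by rewrite -[X in measurable X]setTI; exact: mT.
have : ae_eq mu setT (fun x => kappa x B) (fun x => \d_(T x) B).
  apply: integral_ae_eq => //.
    move=> _ A mA; rewrite setTI.
    have := (@measurable_realfun.measurable_fun_dirac _ _ R setT _ mB) measurableT A mA.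
    by rewrite setTI => /(mT measurableT); rewrite setTI.
  move=> A _ mA; rewrite -kappa_disintegrates //.
  under eq_integral => x _ do rewrite /dirac (_ : \1_B (T x) = \1_(T @^-1` B) x) //.
  by rewrite integral_indic // setIC.
by apply: filterS => x; apply.
Qed.

Lemma disintegration_dirac :
  {ae mu, forall x, forall B, measurable B -> kappa x B = \d_(T x) B}.
Proof.
have boxes := negligible_bigcup
  (fun k => disintegration_dirac_set (boxn_measurable k)).
apply: negligibleS boxes => x /= nx; apply: contra_notP nx => hx.
apply: dirac_from_boxes; first exact: prob_kernel.
by move=> k; apply: contra_notP hx => hk; exists k.
Qed.

End DiracDisintegration.

Lemma UXsp_of (R : realType) m (Usp : 'I_m -> set R) (J : {set 'I_m}) u :
  prodset Usp u -> UXsp Usp J (UXof J u).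
Proof.
by move=> hu j; rewrite /UXof tnth_mktuple; case: (j \in J) => //=; exact: (hu j).
Qed.

Lemma measurable_Xpart (R : realType) d : measurable_fun setT (@Xpart R d).
Proof.
apply/measurable_fun_tnthP => i.
rewrite (_ : _ \o _ = (fun v : d.+1.-tuple R => tnth v (widen_d i))).
  exact: measurable_tnth.
by apply/funext => v /=; rewrite /Xpart tnth_mktuple.
Qed.

Unset Implicit Arguments.
Theorem proposition2 (R : realType) (d0 : measure_display) (Omega : measurableType d0)
  (P : probability Omega R) (d m : nat) (M : SCM R d.+1 m)
  (U : Omega -> m.-tuple R) (V : Omega -> d.+1.-tuple R) (Ss : seq R)
  (Vc : R -> Omega -> d.+1.-tuple R) (F : R * m.-tuple R -> d.-tuple R) :
  wf_SCM M ->
  acyclic_SCM M ->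
  measurable_fun setT U -> (forall w, prodset (Usp M) (U w)) ->
  Vsp M ord_max = [set x | x \in Ss] ->
  is_solution P M U V ->
  (forall s, s \in Ss -> (0 < P ((fun w => Spart (V w)) @^-1` [set s]))%E) ->
  (forall s, s \in Ss ->
     is_solution P (do_model M [set ord_max] (fun _ => s)) U (Vc s)) ->
  measurable_fun [set su | su.1 \in Ss /\ UXsp (Usp M) (JX M) su.2] F ->
  (forall s u, s \in Ss -> UXsp (Usp M) (JX M) u ->
     prodset (fun k => Vsp M (widen_d k)) (F (s, u))) ->
  {ae P, forall w, Xpart (V w) = F (Spart (V w), UXof (JX M) (U w))} ->
  (forall s, s \in Ss ->
     {ae P, forall w, Xpart (Vc s w) = F (s, UXof (JX M) (U w))}) ->
  (* Assumption (I) *)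
  (forall s, s \in Ss -> forall u1 u2,
     UXsp (Usp M) (JX M) u1 -> UXsp (Usp M) (JX M) u2 ->
     F (s, u1) = F (s, u2) -> u1 = u2) ->
  forall s s', s \in Ss -> s' \in Ss ->
  forall T : d.-tuple R -> d.-tuple R,
  measurable_fun setT T ->
  (* T = f_s' o f_s^{-1} on X_s, mu_s-a.e. *)
  {ae condlaw P ((fun w => Spart (V w)) @^-1` [set s]) (fun w => Xpart (V w)),
     forall x, supp (condlaw P ((fun w => Spart (V w)) @^-1` [set s])
                              (fun w => Xpart (V w))) x ->
       exists u, UXsp (Usp M) (JX M) u /\ F (s, u) = x /\ T x = F (s', u)} ->
  [/\
    (* 1. every version of mu_<s'|s>(. | x) is delta_{T x}, mu_s-a.e. on X_s *)
    (forall kappa : R.-pker (d.-tuple R) ~> (d.-tuple R),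
       (forall A B, measurable A -> measurable B ->
          condlaw P ((fun w => Spart (V w)) @^-1` [set s])
                  (fun w => (Xpart (V w), Xpart (Vc s' w))) (A `*` B)
          = (\int[condlaw P ((fun w => Spart (V w)) @^-1` [set s])
                             (fun w => Xpart (V w))]_(x in A) kappa x B)%E) ->
       {ae condlaw P ((fun w => Spart (V w)) @^-1` [set s]) (fun w => Xpart (V w)),
          forall x, supp (condlaw P ((fun w => Spart (V w)) @^-1` [set s])
                                   (fun w => Xpart (V w))) x ->
            forall B, measurable B -> kappa x B = \d_(T x) B}),
    (* 2. mu_<s'|s> = T_# mu_s *)
    (forall B, measurable B ->
       condlaw P ((fun w => Spart (V w)) @^-1` [set s]) (fun w => Xpart (Vc s' w)) B
       = pushforward (condlaw P ((fun w => Spart (V w)) @^-1` [set s])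
                              (fun w => Xpart (V w))) T B)
  & (* 3. pi*_<s'|s> = (I x T)_# mu_s *)
    (forall C, measurable C ->
       condlaw P ((fun w => Spart (V w)) @^-1` [set s])
               (fun w => (Xpart (V w), Xpart (Vc s' w))) C
       = pushforward (condlaw P ((fun w => Spart (V w)) @^-1` [set s])
                              (fun w => Xpart (V w))) (fun x => (x, T x)) C)].
Proof.
move=> _ _ _ Urng _ solV Spos solVc _ _ HX HXc Hinj s s' ss ss' T mT.
set E := (fun w => Spart (V w)) @^-1` [set s].
set X := (fun w => Xpart (V w)).
set X' := (fun w => Xpart (Vc s' w)).
have [mV _ _] := solV.
have [mVc _ _] := solVc s' ss'.
have mX : measurable_fun setT X := measurableT_comp (@measurable_Xpart R d) mV.
have mX' : measurable_fun setT X' := measurableT_comp (@measurable_Xpart R d) mVc.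
have mTX : measurable_fun setT (T \o X) := measurableT_comp mT mX.
have mE : measurable E.
  have mS : measurable_fun setT (fun w => Spart (V w)) :=
    measurableT_comp (measurable_tnth ord_max) mV.
  by rewrite -[E]setTI; apply: mS => //; exact: measurable_set1.
rewrite (condlawE P mE mX) => HT.
(* On {S = s}: X = f_s(U_X) and X' = f_s'(U_X), hence X' = T(X). *)
have transport : {ae P, forall w, E w -> X' w = T (X w)}.
  apply: (counterfactual_transport (Ux := fun w => UXof (JX M) (U w))
    (f := fun u => F (s, u)) (f' := fun u => F (s', u))
    (Spos s ss) _ (Hinj s ss) _ _ HT).
  - by move=> w; exact: UXsp_of (Urng w).
  - by apply: filterS HX => w + Ew; rewrite Ew.
  - by apply: filterS (HXc s' ss') => w + _.
(* Part 3, from which the disintegration identity of part 1 follows. *)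
have coupling C : measurable C ->
    condlaw P E (fun w => (X w, X' w)) C
    = pushforward (cond_law P mE mX) (fun x => (x, T x)) C.
  move=> mC; rewrite /pushforward -condlawE.
  transitivity (condlaw P E (fun w => (X w, T (X w))) C) => //.
  apply: condlaw_ae_congr => //; first exact: measurable_fun_pair.
    exact: measurable_fun_pair.
  by apply: filterS transport => w + Ew; rewrite /= => ->.
split => //.
- move=> kappa Hk.
  have disint := @disintegration_dirac R d (cond_law P mE mX)
    (cond_law_fin P mE mX measurableT) T mT kappa.
  apply: filterS (disint _) => [x + _ //|A B mA mB].
  by rewrite -Hk // coupling //; exact: measurableX.
- move=> B mB; rewrite /pushforward -condlawE.
  exact: (condlaw_ae_congr mE mX' mTX transport mB).
Qed.
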